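(* For all $n\geq1$ and all formulas $\phi,\chi_1,\dots,\chi_n\in\mathcal{L}(\nabla,\bullet)$, $$\vdash_{\mathbf{K}^{\nabla\bullet}}\circ\Big(\bigwedge_{k=1}^n\chi_k\to\phi\Big)\land\bigwedge_{k=1}^n\circ(\neg\phi\to\chi_k)\to\circ\phi.$$
   Context: $\mathcal{L}(\nabla,\bullet)$: $\phi::=p\mid\neg\phi\mid\phi\land\phi\mid\nabla\phi\mid\bullet\phi$ over a nonempty set of propositional variables; $\Delta\phi:=\neg\nabla\phi$, $\circ\phi:=\neg\bullet\phi$. The Hilbert system $\mathbf{K}^{\nabla\bullet}$ has axioms: A0 all instances of propositional tautologies; A1 $\bullet\phi\to\phi$; A2 $\nabla\phi\leftrightarrow\nabla\neg\phi$; A3 $\bullet(\psi\to\phi)\land\phi\to\bullet\phi$; A4 $\nabla(\phi\land\psi)\to\nabla\phi\vee\nabla\psi$; A5 $\bullet(\phi\land\psi)\to\bullet\phi\vee\bullet\psi$; A6 $\nabla\phi\to\bullet\phi\vee\bullet\neg\phi$; A7 $\bullet(\phi\to\psi)\land\bullet(\neg\phi\to\chi)\to\nabla\phi$; and rules: R1 from $\phi$ infer $\Delta\phi$; R2 from $\phi$ infer $\circ\phi$; R3 from $\phi\leftrightarrow\psi$ infer $\Delta\phi\leftrightarrow\Delta\psi$; R4 from $\phi\leftrightarrow\psi$ infer $\circ\phi\leftrightarrow\circ\psi$; MP. *)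

From Stdlib Require Import List.
Import ListNotations.

Inductive form : Type :=
| Var : nat -> form
| Neg : form -> form
| And : form -> form -> form
| Nabla : form -> form
| Bullet : form -> form.

Definition Imp (p q : form) : form := Neg (And p (Neg q)).
Definition Or (p q : form) : form := Neg (And (Neg p) (Neg q)).
Definition Iff (p q : form) : form := And (Imp p q) (Imp q p).
Definition Delta (p : form) : form := Neg (Nabla p).
Definition Circ (p : form) : form := Neg (Bullet p).

(* Propositional tautologies: true under every valuation that treats
   variables and modal formulas (Nabla p, Bullet p) as atoms. *)
Fixpoint peval (v : form -> bool) (f : form) : bool :=
  match f with
  | Var _ => v f
  | Neg p => negb (peval v p)
  | And p q => andb (peval v p) (peval v q)
  | Nabla _ => v f
  | Bullet _ => v f
  end.

Definition tautology (f : form) : Prop := forall v : form -> bool, peval v f = true.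

Inductive derivable : form -> Prop :=
| A0 : forall f, tautology f -> derivable f
| A1 : forall p, derivable (Imp (Bullet p) p)
| A2 : forall p, derivable (Iff (Nabla p) (Nabla (Neg p)))
| A3 : forall p q, derivable (Imp (And (Bullet (Imp q p)) p) (Bullet p))
| A4 : forall p q, derivable (Imp (Nabla (And p q)) (Or (Nabla p) (Nabla q)))
| A5 : forall p q, derivable (Imp (Bullet (And p q)) (Or (Bullet p) (Bullet q)))
| A6 : forall p, derivable (Imp (Nabla p) (Or (Bullet p) (Bullet (Neg p))))
| A7 : forall p q r,
    derivable (Imp (And (Bullet (Imp p q)) (Bullet (Imp (Neg p) r))) (Nabla p))
| R1 : forall p, derivable p -> derivable (Delta p)
| R2 : forall p, derivable p -> derivable (Circ p)
| R3 : forall p q, derivable (Iff p q) -> derivable (Iff (Delta p) (Delta q))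
| R4 : forall p q, derivable (Iff p q) -> derivable (Iff (Circ p) (Circ q))
| MP : forall p q, derivable (Imp p q) -> derivable p -> derivable q.

Fixpoint bigwedge_from (chi : nat -> form) (k m : nat) : form :=
  (* conjunction of chi k, ..., chi (k + m) *)
  match m with
  | 0 => chi k
  | S m' => And (chi k) (bigwedge_from chi (S k) m')
  end.

Definition bigwedge (chi : nat -> form) (n : nat) : form :=
  bigwedge_from chi 1 (n - 1).

(* The axiom A5 says, contrapositively, that circ distributes over conjunction:
   circ p /\ circ q -> circ (p /\ q).  Hence the hypotheses give
   circ ((/\_k chi_k -> phi) /\ /\_k (~ phi -> chi_k)), and the formula under
   this circ is propositionally equivalent to phi, so R4 turns it into circ phi. *)
From Stdlib Require Import List.
Import ListNotations.

Ltac decide_by_cases :=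
  repeat match goal with
  | v : form -> bool |- context [peval ?w ?x] => constr_eq w v; destruct (peval v x)
  | v : form -> bool |- context [?w ?x] => constr_eq w v; destruct (v x)
  end; simpl; intros; congruence.

Lemma derivable_taut_conseq (premises : list form) (c : form) :
  Forall derivable premises ->
  (forall v, forallb (peval v) premises = true -> peval v c = true) ->
  derivable c.
Proof.
  revert c; induction premises as [|a premises IH]; intros c Hder Hsem.
  - apply A0; intro v; exact (Hsem v eq_refl).
  - inversion Hder as [|? ? Ha Hpremises]; subst.
    apply (MP a c); [|exact Ha].
    apply IH; [exact Hpremises|].
    intros v Hv; specialize (Hsem v); simpl in Hsem |- *; rewrite Hv in Hsem.
    destruct (peval v a), (peval v c); simpl in *; auto.
Qed.

Lemma circ_and (p q : form) :
  derivable (Imp (And (Circ p) (Circ q)) (Circ (And p q))).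
Proof.
  apply (derivable_taut_conseq [Imp (Bullet (And p q)) (Or (Bullet p) (Bullet q))]).
  - repeat apply Forall_cons; [apply A5 | apply Forall_nil].
  - intro v; simpl; decide_by_cases.
Qed.

Lemma circ_bigwedge_from (D : nat -> form) (m : nat) : forall k,
  derivable (Imp (bigwedge_from (fun i => Circ (D i)) k m)
                 (Circ (bigwedge_from D k m))).
Proof.
  induction m as [|m IH]; intro k; simpl.
  - apply A0; intro v; simpl; decide_by_cases.
  - apply (derivable_taut_conseq
             [Imp (bigwedge_from (fun i => Circ (D i)) (S k) m)
                  (Circ (bigwedge_from D (S k) m));
              Imp (And (Circ (D k)) (Circ (bigwedge_from D (S k) m)))
                  (Circ (And (D k) (bigwedge_from D (S k) m)))]).
    + repeat apply Forall_cons; [apply IH | apply circ_and | apply Forall_nil].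
    + intro v; simpl; decide_by_cases.
Qed.

Lemma peval_bigwedge_from_imp_neg (v : form -> bool) (phi : form)
    (chi : nat -> form) (m : nat) : forall k,
  peval v (bigwedge_from (fun i => Imp (Neg phi) (chi i)) k m)
  = orb (peval v phi) (peval v (bigwedge_from chi k m)).
Proof.
  induction m as [|m IH]; intro k; simpl; [|rewrite IH];
    destruct (peval v phi), (peval v (chi k)); reflexivity.
Qed.

Theorem proposition9 :
  forall (n : nat) (phi : form) (chi : nat -> form),
    1 <= n ->
    derivable
      (Imp (And (Circ (Imp (bigwedge chi n) phi))
                (bigwedge (fun k => Circ (Imp (Neg phi) (chi k))) n))
           (Circ phi)).
Proof.
  intros n phi chi _; unfold bigwedge.
  set (X := bigwedge_from chi 1 (n - 1)).
  set (Y := bigwedge_from (fun i => Imp (Neg phi) (chi i)) 1 (n - 1)).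
  assert (Hequiv : derivable (Iff (Circ (And (Imp X phi) Y)) (Circ phi))).
  { apply R4, A0; intro v; unfold Y; simpl.
    rewrite (peval_bigwedge_from_imp_neg v); fold X; simpl; decide_by_cases. }
  apply (derivable_taut_conseq
           [Iff (Circ (And (Imp X phi) Y)) (Circ phi);
            Imp (And (Circ (Imp X phi)) (Circ Y)) (Circ (And (Imp X phi) Y));
            Imp (bigwedge_from (fun k => Circ (Imp (Neg phi) (chi k))) 1 (n - 1))
                (Circ Y)]).
  - repeat apply Forall_cons;
      [exact Hequiv | apply circ_and | apply circ_bigwedge_from | apply Forall_nil].
  - intro v; simpl; decide_by_cases.
Qed.
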